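(* Let $d\ge1$ and equip $\mathbb{R}^d$ with the $\ell^\infty$-norm $|(\xi^1,\dots,\xi^d)|_\infty=\max_i|\xi^i|$. Let $C_d$ be the smallest real constant such that for every $N\ge1$, every $(\xi_1,\dots,\xi_N)\in([0,1]^d)^N$ and every continuous $f:[0,1]^d\to\mathbb{R}$, $$\Big|\int_{[0,1]^d}f(u)\,du-\frac1N\sum_{i=1}^Nf(\xi_i)\Big|\le C_d\,w\big(f,D^*_N(\xi_1,\dots,\xi_N)^{\frac1d}\big)$$ (this constant is finite, with $C_1=1$ and $C_d\in[1,4]$ for $d\ge2$). Then: (a) for every $N\ge1$ and every $(\xi_1,\dots,\xi_N)\in([0,1]^d)^N$, $$e_1\big(\{\xi_1,\dots,\xi_N\},U([0,1]^d)\big)\le C_d\,D^*_N(\xi_1,\dots,\xi_N)^{\frac1d};$$ (b) in particular, when $d=1$, $e_1\big(\{\xi_1,\dots,\xi_N\},U([0,1])\big)\le D^*_N(\xi_1,\dots,\xi_N)$.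
   Context: $U([0,1]^d)$ is the uniform distribution on $[0,1]^d$ and, for $U\sim U([0,1]^d)$ and $\Gamma\subset\mathbb{R}^d$, $e_1(\Gamma,U([0,1]^d))=\mathbb{E}\min_{a\in\Gamma}|U-a|_\infty$. The star discrepancy is $D^*_N(\xi_1,\dots,\xi_N)=\sup_{u\in[0,1]^d}\big|\frac1N\sum_{i=1}^N\mathbf{1}_{\{\xi_i\in[\![0,u]\!]\}}-\lambda_d([\![0,u]\!])\big|$ where $[\![0,u]\!]=\prod_{\ell=1}^d[0,u^\ell]$. The uniform continuity modulus is $w(f,\delta)=\sup\{|f(\xi)-f(\xi')|:\xi,\xi'\in[0,1]^d,\ |\xi-\xi'|_\infty\le\delta\}$. *)

From HB Require Import structures.
From mathcomp Require Import all_boot all_order all_algebra.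
From mathcomp Require Import all_classical all_reals all_analysis.
Unset Printing Implicit Defensive.
Import Order.TTheory GRing.Theory Num.Theory.
Local Open Scope classical_set_scope.
Local Open Scope ring_scope.

(* Points of R^d are d-tuples (these carry MathComp-Analysis' product
   sigma-algebra, generated by the coordinate maps). *)

Definition linf_dist {R : realType} {d : nat} (x y : d.-tuple R) : R :=
  \big[Num.max/0]_(l < d) `|tnth x l - tnth y l|.

Definition cube {R : realType} (d : nat) : set (d.-tuple R) :=
  [set x | forall l : 'I_d, 0 <= tnth x l <= 1].

Definition box0 {R : realType} {d : nat} (u : d.-tuple R) : set (d.-tuple R) :=
  [set x | forall l : 'I_d, 0 <= tnth x l <= tnth u l].

Definition vol0 {R : realType} {d : nat} (u : d.-tuple R) : R :=
  \prod_(l < d) tnth u l.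

Definition local_discrepancy {R : realType} {d N : nat} (xi : 'I_N -> d.-tuple R)
  (u : d.-tuple R) : R :=
  (N%:R)^-1 * (\sum_(i < N) (if [forall l : 'I_d, 0 <= tnth (xi i) l <= tnth u l]
                              then 1 else 0)) - vol0 u.

Definition star_discrepancy {R : realType} {d N : nat} (xi : 'I_N -> d.-tuple R) : R :=
  sup [set `|local_discrepancy xi u| | u in cube d].

Definition continuous_on_cube {R : realType} {d : nat} (f : d.-tuple R -> R) : Prop :=
  forall x, cube d x -> forall e : R, 0 < e -> exists2 delta : R, 0 < delta &
    forall y, cube d y -> linf_dist x y < delta -> `|f x - f y| < e.

Definition modulus {R : realType} {d : nat} (f : d.-tuple R -> R) (delta : R) : R :=
  sup [set (fun p : d.-tuple R * d.-tuple R => `|f p.1 - f p.2|) p | p in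
        [set p : d.-tuple R * d.-tuple R | cube d p.1 /\ cube d p.2 /\ linf_dist p.1 p.2 <= delta]].

(* mu is Lebesgue measure on [0,1]^d: it gives mass prod_l u^l to every box
   [[0,u]], u in [0,1]^d (this determines mu on the Borel subsets of [0,1]^d). *)
Definition is_lebesgue_on_cube {R : realType} {d : nat}
  (mu : {measure set (d.-tuple R) -> \bar R}) : Prop :=
  forall u, cube d u -> mu (box0 u) = (vol0 u)%:E.

Definition admissible_const {R : realType} {d : nat}
  (mu : {measure set (d.-tuple R) -> \bar R}) (c : R) : Prop :=
  forall (N : nat), (0 < N)%N -> forall xi : 'I_N -> d.-tuple R,
    (forall i, cube d (xi i)) ->
    forall f : d.-tuple R -> R, continuous_on_cube f ->
      `| Rintegral mu (cube d) f - (N%:R)^-1 * \sum_(i < N) f (xi i) |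
        <= c * modulus f (star_discrepancy xi `^ (d%:R)^-1).

Definition C_const {R : realType} {d : nat}
  (mu : {measure set (d.-tuple R) -> \bar R}) : \bar R :=
  ereal_inf [set c%:E | c in [set c : R | admissible_const mu c]].

(* e_1({xi_1..xi_N}, U([0,1]^d)) = E min_i |U - xi_i|_infty *)
Definition quant_error1 {R : realType} {d N : nat}
  (mu : {measure set (d.-tuple R) -> \bar R}) (xi : 'I_N -> d.-tuple R) : R :=
  Rintegral mu (cube d) (fun x => inf [set linf_dist x (xi i) | i in [set: 'I_N]]).

From HB Require Import structures.
From mathcomp Require Import all_boot all_order all_algebra.
From mathcomp Require Import all_classical all_reals all_analysis.
From mathcomp Require Import ring lra zify.
Import Order.TTheory GRing.Theory Num.Theory.
Local Open Scope classical_set_scope.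
Local Open Scope ring_scope.

(* The distance to the nearest node, x |-> min_i |x - xi_i|_oo, is 1-Lipschitz and
   vanishes at the nodes.  Fed into the modulus-of-continuity bound with an admissible
   constant c it gives e_1 <= c w(f, D^(1/d)) <= c D^(1/d), and since D > 0 the
   infimum over c yields (a).  For d = 1 we argue directly: a node-free ball of radius
   r around v in [0,1] is an interval on which the empirical distribution function is
   constant, which forces r <= D; hence the nearest-node distance is pointwise at
   most D, and so is its integral over [0,1]. *)

Section LinfDist.
Context {R : realType} {d : nat}.
Implicit Types (x y z : d.-tuple R) (s t : R).

Lemma linf_dist_ge0 x y : 0 <= linf_dist x y.
Proof.
by rewrite /linf_dist; elim/big_ind: _ => // a b ? ?; rewrite le_max; apply/orP; left.
Qed.

Lemma coord_le_linf_dist x y l : `|tnth x l - tnth y l| <= linf_dist x y.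
Proof. exact: (le_bigmax _ (fun l => `|tnth x l - tnth y l|) l). Qed.

Lemma linf_dist_le x y M :
  0 <= M -> (forall l, `|tnth x l - tnth y l| <= M) -> linf_dist x y <= M.
Proof. by move=> M0 h; apply: bigmax_le. Qed.

Lemma linf_distC x y : linf_dist x y = linf_dist y x.
Proof.
by apply/le_anti/andP; split; apply: linf_dist_le (linf_dist_ge0 _ _) _ => l;
  rewrite distrC coord_le_linf_dist.
Qed.

Lemma linf_dist_triangle x y z : linf_dist x z <= linf_dist x y + linf_dist y z.
Proof.
apply: linf_dist_le => [|l]; first by rewrite addr_ge0 ?linf_dist_ge0.
by apply: le_trans (ler_distD (tnth y l) _ _) _; rewrite lerD ?coord_le_linf_dist.
Qed.

Lemma linf_dist_xx x : linf_dist x x = 0.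
Proof.
apply/le_anti; rewrite linf_dist_ge0 andbT.
by apply: linf_dist_le => // l; rewrite subrr normr0.
Qed.

Lemma linf_dist_nseq s t :
  linf_dist [tuple of nseq d s] [tuple of nseq d t] <= `|s - t|.
Proof. by apply: linf_dist_le => // l; rewrite !tnth_nseq. Qed.

Lemma cube_nseq t : 0 <= t -> t <= 1 -> cube d [tuple of nseq d t].
Proof. by move=> t0 t1 l; rewrite tnth_nseq t0 t1. Qed.

Lemma vol0_nseq t : vol0 [tuple of nseq d t] = t ^+ d.
Proof.
rewrite /vol0 (eq_bigr (fun=> t)) => [|l _]; last by rewrite tnth_nseq.
by rewrite prodr_const card_ord.
Qed.

End LinfDist.

Section Lipschitz.
Context {R : realType} {d : nat}.

Definition lipschitz1 (f : d.-tuple R -> R) : Prop :=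
  forall x y, `|f x - f y| <= linf_dist x y.

Variable f : d.-tuple R -> R.
Hypothesis f_lip : lipschitz1 f.

Lemma lipschitz1_continuous_on_cube : continuous_on_cube f.
Proof. by move=> x _ e e0; exists e => // y _; apply: le_lt_trans (f_lip x y). Qed.

Lemma modulus_lipschitz1_le delta : 0 <= delta -> modulus f delta <= delta.
Proof.
move=> delta0; set o := [tuple of nseq d (0 : R)].
have co : cube d o := cube_nseq 0 (lexx 0) ler01.
apply: ge_sup => [|_ [[x y] /= [_ [_ xy]] <-]]; last exact: le_trans (f_lip x y) xy.
by exists `|f o - f o|, (o, o) => //; rewrite /= linf_dist_xx.
Qed.

Lemma modulus_lipschitz1_ge delta x y :
  cube d x -> cube d y -> linf_dist x y <= delta -> `|f x - f y| <= modulus f delta.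
Proof.
move=> cx cy xy; apply: ub_le_sup; last by exists (x, y).
by exists delta => _ [[x' y'] /= [_ [_ xy']] <-]; exact: le_trans (f_lip x' y') xy'.
Qed.

End Lipschitz.

Lemma coord_lipschitz1 {R : realType} {d : nat} (l : 'I_d) :
  lipschitz1 (fun x : d.-tuple R => tnth x l).
Proof. by move=> x y; exact: coord_le_linf_dist. Qed.

Lemma modulus_coord_gt0 {R : realType} {d : nat} (l : 'I_d) (delta : R) :
  0 < delta -> 0 < modulus (fun x : d.-tuple R => tnth x l) delta.
Proof.
move=> delta0; set t := Num.min delta 1.
have t0 : 0 < t by rewrite lt_min delta0 ltr01.
have t1 : t <= 1 by rewrite ge_min lexx orbT.
have tdelta : linf_dist [tuple of nseq d t] [tuple of nseq d 0] <= delta.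
  by apply: le_trans (linf_dist_nseq _ _) _; rewrite subr0 gtr0_norm // ge_min lexx.
have := modulus_lipschitz1_ge _ (coord_lipschitz1 l) _ _ _
  (cube_nseq t (ltW t0) t1) (cube_nseq 0 (lexx 0) ler01) tdelta.
by apply: lt_le_trans; rewrite !tnth_nseq subr0 gtr0_norm.
Qed.

Section NearestDist.
Context {R : realType} {d N : nat}.
Variable xi : 'I_N -> d.-tuple R.

Definition nearest_dist (x : d.-tuple R) : R :=
  inf [set linf_dist x (xi i) | i in [set: 'I_N]].

Lemma nearest_dist_ge0 x : 0 <= nearest_dist x.
Proof.
rewrite /nearest_dist.
have [->|ne] := eqVneq [set linf_dist x (xi i) | i in [set: 'I_N]] set0.
  by rewrite inf0.
by apply: lb_le_inf => [|_ [i _ <-]]; [exact/set0P|exact: linf_dist_ge0].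
Qed.

Lemma nearest_dist_le x i : nearest_dist x <= linf_dist x (xi i).
Proof. by apply: ge_inf; [exists 0 => _ [j _ <-]; exact: linf_dist_ge0|exists i]. Qed.

Lemma nearest_dist_node i : nearest_dist (xi i) = 0.
Proof.
by apply/le_anti; rewrite nearest_dist_ge0 -(linf_dist_xx (xi i)) nearest_dist_le.
Qed.

Lemma nearest_dist_lipschitz1 : (0 < N)%N -> lipschitz1 nearest_dist.
Proof.
move=> N0.
suff lip_half x y : nearest_dist y <= nearest_dist x + linf_dist x y.
  by move=> x y; rewrite ler_norml; have := lip_half x y; have := lip_half y x;
    rewrite linf_distC; lra.
apply/ler_addgt0Pr => e e0.
have ne : [set linf_dist x (xi i) | i in [set: 'I_N]] !=set0.
  by exists (linf_dist x (xi (Ordinal N0))), (Ordinal N0).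
have lb : has_lbound [set linf_dist x (xi i) | i in [set: 'I_N]].
  by exists 0 => _ [i _ <-]; exact: linf_dist_ge0.
have [_ [i _ <-] xi_near] := inf_adherent e0 (conj ne lb).
apply: le_trans (nearest_dist_le y i) _.
apply: le_trans (linf_dist_triangle y x (xi i)) _.
by rewrite linf_distC -/(nearest_dist x); lra.
Qed.

End NearestDist.

Section Discrepancy.
Context {R : realType} {d N : nat}.
Variable xi : 'I_N -> d.-tuple R.
Hypothesis N_gt0 : (0 < N)%N.

Lemma local_discrepancy_le1 u : cube d u -> `|local_discrepancy xi u| <= 1.
Proof.
move=> cu; rewrite /local_discrepancy; set S := \sum_(i < N) _.
have N0 : 0 < N%:R :> R by rewrite ltr0n.
have S0 : 0 <= S by apply: sumr_ge0 => i _; case: ifP.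
have SN : S <= N%:R.
  rewrite -[in leRHS](card_ord N) -sum1_card natr_sum.
  by apply: ler_sum => i _; case: ifP.
have freq01 : 0 <= N%:R^-1 * S <= 1.
  by rewrite mulr_ge0 ?invr_ge0 ?ler0n //= ler_pdivrMl // mulr1.
have vol01 : 0 <= vol0 u <= 1.
  rewrite prodr_ge0 => [|l _]; last by case/andP: (cu l).
  by apply: prodr_ile1 => l _; exact: cu.
by move: freq01 vol01 => /andP[? ?] /andP[? ?]; rewrite ler_norml; lra.
Qed.

Lemma local_discrepancy_le_star u :
  cube d u -> `|local_discrepancy xi u| <= star_discrepancy xi.
Proof.
move=> cu; apply: ub_le_sup; last by exists u.
by exists 1 => _ [v cv <-]; exact: local_discrepancy_le1.
Qed.

Lemma star_discrepancy_ge0 : 0 <= star_discrepancy xi.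
Proof.
exact: le_trans (normr_ge0 _) (local_discrepancy_le_star _ (cube_nseq 0 (lexx 0) ler01)).
Qed.

(* N times the empirical measure of a box is an integer, N times its volume is 1/2. *)
Lemma local_discrepancy_neq0 u :
  vol0 u = (2 * N%:R)^-1 -> local_discrepancy xi u != 0.
Proof.
move=> vol_u; rewrite /local_discrepancy vol_u subr_eq0.
set in_box := fun i => [forall l, 0 <= tnth (xi i) l <= tnth u l].
have [k ->] : exists k : nat,
    \sum_(i < N) (if in_box i then 1 else 0) = k%:R :> R.
  exists (\sum_(i < N) (in_box i : nat)).
  by rewrite natr_sum; apply: eq_bigr => i _; case: ifP.
have N0 : N%:R != 0 :> R by rewrite pnatr_eq0 -lt0n.
apply/eqP => freq_u.
have : (2 * k)%:R = 1 :> R.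
  rewrite natrM (_ : k%:R = N%:R * (2 * N%:R)^-1); first by field.
  by rewrite -freq_u mulrA mulfV ?mul1r.
by move/eqP; rewrite pnatr_eq1; lia.
Qed.

Lemma star_discrepancy_gt0 : (0 < d)%N -> 0 < star_discrepancy xi.
Proof.
move=> d0; set a : R := (2 * N%:R)^-1; set t := a `^ (d%:R)^-1.
have a0 : 0 < a by rewrite invr_gt0 mulr_gt0 ?ltr0n.
have a1 : a <= 1 by rewrite invf_le1 ?mulr_gt0 ?ltr0n // -natrM ler1n; lia.
have t1 : t <= 1.
  by rewrite /t -[leRHS](powRr0 a); apply: ger_powR; rewrite ?a0 ?a1 // invr_ge0 ler0n.
have td : t ^+ d = a.
  by rewrite /t -powR_mulrn ?powR_ge0 // -powRrM mulVf ?powRr1 ?ltW // pnatr_eq0 -lt0n.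
have cu : cube d [tuple of nseq d t] := cube_nseq t (powR_ge0 _ _) t1.
rewrite lt_neqAle star_discrepancy_ge0 andbT; apply/eqP => D0.
have := local_discrepancy_le_star _ cu; rewrite -D0 normr_le0.
by move/negP: (local_discrepancy_neq0 _ (etrans (vol0_nseq t) td)).
Qed.

End Discrepancy.

Lemma measurable_cube {R : realType} {d : nat} :
  measurable (cube d : set (d.-tuple R)).
Proof.
have -> : cube d =
    \bigcap_(l in [set` enum 'I_d]) ((fun x : d.-tuple R => tnth x l) @^-1` `[0, 1]).
  apply/seteqP; split=> [x cx l _|x cx l] /=; first by rewrite in_itv; exact: cx.
  by have := cx l; rewrite /= mem_enum in_itv => /(_ isT).
rewrite bigcap_seq; apply: bigsetI_measurable => l _.
by rewrite -[X in measurable X]setTI; exact: measurable_tnth.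
Qed.

Section CubeIntegral.
Context {R : realType} {d : nat}.
Variable mu : {measure set (d.-tuple R) -> \bar R}.
Hypothesis mu_lebesgue : is_lebesgue_on_cube mu.

Lemma measure_cube : mu (cube d) = 1%:E.
Proof.
have -> : cube d = box0 [tuple of nseq d (1 : R)].
  by apply/seteqP; split=> x cx l; have := cx l; rewrite tnth_nseq.
by rewrite mu_lebesgue ?vol0_nseq ?expr1n //; exact: cube_nseq 1 ler01 (lexx 1).
Qed.

(* No measurability of [f] is needed: the integral of a nonnegative function is the
   supremum of the integrals of the simple functions below it. *)
Lemma Rintegral_cube_le (f : d.-tuple R -> R) M :
  (forall x, cube d x -> 0 <= f x <= M) -> Rintegral mu (cube d) f <= M.
Proof.
move=> f0M; have f0 x : cube d x -> (0 <= (f x)%:E)%E.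
  by move=> cx; rewrite lee_fin; case/andP: (f0M x cx).
have M0 : 0 <= M.
  by case/andP: (f0M _ (cube_nseq 0 (lexx 0) ler01)); exact: le_trans.
have int_le : (\int[mu]_(x in cube d) (f x)%:E <= M%:E)%E.
  have <- : (\int[mu]_(x in cube d) (cst M%:E) x = M%:E)%E.
    by rewrite integral_cst ?measure_cube ?mule1 //; exact: measurable_cube.
  rewrite ge0_integralE // ge0_integralE => [|x _]; last by rewrite lee_fin.
  apply: ereal_sup_le => _ [h /= hf <-]; exists h => //= x.
  apply: le_trans (hf x) _; rewrite /patch; case: ifP => // /set_mem cx.
  by rewrite lee_fin; case/andP: (f0M x cx).
have int_ge0 : (0 <= \int[mu]_(x in cube d) (f x)%:E)%E by exact: integral_ge0.
move: int_le int_ge0; rewrite /Rintegral.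
by case: (\int[mu]_(x in cube d) (f x)%:E)%E => //= r; rewrite !lee_fin.
Qed.

End CubeIntegral.

Section QuantizationBound.
Context {R : realType} {d : nat}.
Variable mu : {measure set (d.-tuple R) -> \bar R}.
Hypothesis d_gt0 : (0 < d)%N.

(* Test the bound on the coordinate map and a single point: the left-hand side is
   nonnegative while the modulus is positive. *)
Lemma admissible_const_ge0 c : admissible_const mu c -> 0 <= c.
Proof.
move=> c_adm; pose o := [tuple of nseq d (0 : R)].
have co : cube d o := cube_nseq 0 (lexx 0) ler01.
have f_lip := @coord_lipschitz1 R d (Ordinal d_gt0).
have := c_adm 1%N isT (fun=> o) (fun=> co) _ (lipschitz1_continuous_on_cube _ f_lip).
move/(le_trans (normr_ge0 _)); rewrite pmulr_lge0 //.
by apply/modulus_coord_gt0/powR_gt0/star_discrepancy_gt0.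
Qed.

Variables (N : nat) (xi : 'I_N -> d.-tuple R).
Hypotheses (N_gt0 : (0 < N)%N) (xi_cube : forall i, cube d (xi i)).

Lemma quant_error1_le_admissible c : admissible_const mu c ->
  quant_error1 mu xi <= c * star_discrepancy xi `^ (d%:R)^-1.
Proof.
move=> c_adm; have lip := nearest_dist_lipschitz1 xi N_gt0.
have := c_adm N N_gt0 xi xi_cube _ (lipschitz1_continuous_on_cube _ lip).
rewrite big1 => [|i _]; last exact: nearest_dist_node.
rewrite mulr0 subr0 ger0_norm; last first.
  by apply: Rintegral_ge0 => x _; exact: nearest_dist_ge0.
move/le_trans; apply; apply: ler_wpM2l; first exact: admissible_const_ge0 c_adm.
exact/modulus_lipschitz1_le/powR_ge0.
Qed.

End QuantizationBound.

Lemma lee_ereal_inf_mulr {R : realType} (S : set R) (x delta : R) : 0 < delta ->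
  (forall c, S c -> x <= c * delta) ->
  (x%:E <= ereal_inf [set c%:E | c in S] * delta%:E)%E.
Proof.
move=> delta0 xS; rewrite -[x](divfK (lt0r_neq0 delta0)) EFinM.
apply: lee_wpmul2r; first by rewrite lee_fin ltW.
by apply: le_ereal_inf_tmp => _ [c Sc <-]; rewrite lee_fin ler_pdivrMr ?xS.
Qed.

Section EmpiricalCdf.
Context {R : realType} {N : nat}.
Variable x : 'I_N -> R.
Hypothesis x01 : forall i, 0 <= x i <= 1.

Definition empirical_cdf (t : R) : R :=
  N%:R^-1 * \sum_(i < N) (if 0 <= x i <= t then 1 else 0).

Lemma empirical_cdf_gap t1 t2 : t1 <= t2 ->
  (forall i, (x i <= t1) || (t2 < x i)) -> empirical_cdf t1 = empirical_cdf t2.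
Proof.
move=> t12 gap; congr (_ * _); apply: eq_bigr => i _.
case/andP: (x01 i) => -> _ /=; case/orP: (gap i) => [xt1|t2x].
  by rewrite xt1 (le_trans xt1 t12).
by rewrite !leNgt t2x (le_lt_trans t12 t2x).
Qed.

Lemma empirical_cdf_eq0 t : (forall i, t < x i) -> empirical_cdf t = 0.
Proof.
move=> tx; rewrite /empirical_cdf big1 ?mulr0 // => i _.
by rewrite [x i <= t]leNgt tx andbF.
Qed.

Lemma empirical_cdf_eq1 t : (0 < N)%N -> (forall i, x i <= t) -> empirical_cdf t = 1.
Proof.
move=> N0 xt; rewrite /empirical_cdf (eq_bigr (fun=> 1)) => [|i _]; last first.
  by case/andP: (x01 i) => -> _; rewrite xt.
by rewrite sumr_const card_ord mulVf // pnatr_eq0 -lt0n.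
Qed.

(* A ball of radius r around v free of nodes is an interval of length 2r (or r,
   cut by an endpoint of [0,1]) on which the empirical cdf is constant. *)
Lemma node_free_radius_le (D v r : R) : (0 < N)%N ->
  (forall t, 0 <= t <= 1 -> `|empirical_cdf t - t| <= D) ->
  0 <= v <= 1 -> (forall i, r <= `|v - x i|) -> r <= D.
Proof.
move=> N0 cdfD /andP[v0 v1] node_free; rewrite leNgt; apply/negP => Dr.
have D0 : 0 <= D by apply: le_trans (cdfD 0 _); rewrite ?lexx ?ler01.
have far i : (x i <= v - r) || (v + r <= x i).
  by have := node_free i; rewrite leNgt ltr_distlC negb_and -!leNgt.
set s := (r + D) / 2; have Ds : D < s by rewrite /s; lra.
have sr : s < r by rewrite /s; lra.
have cdf_le t : 0 <= t -> t <= 1 -> `|empirical_cdf t - t| <= D.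
  by move=> t0 t1; apply: cdfD; rewrite t0 t1.
case: (lerP 0 (v - r)) => left_in; case: (lerP (v + r) 1) => right_in.
- have same : empirical_cdf (v - r) = empirical_cdf (v + s).
    apply: empirical_cdf_gap => [|i]; first lra.
    by case/orP: (far i) => [->//|?]; apply/orP; right; lra.
  have := cdf_le (v - r) left_in ltac:(lra).
  have := cdf_le (v + s) ltac:(lra) ltac:(lra).
  by rewrite same !ler_norml; lra.
- have := cdf_le (v - r) left_in ltac:(lra).
  rewrite empirical_cdf_eq1 // => [|i]; first by rewrite ler_norml; lra.
  by case/orP: (far i) => // ?; case/andP: (x01 i) => _ ?; lra.
- have := cdf_le (v + s) ltac:(lra) ltac:(lra).
  rewrite empirical_cdf_eq0 => [|i]; first by rewrite ler_norml; lra.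
  by case/orP: (far i) => ?; [case/andP: (x01 i) => ? _|]; lra.
- by case/andP: (x01 (Ordinal N0)) => ? ?; case/orP: (far (Ordinal N0)) => ?; lra.
Qed.

End EmpiricalCdf.

Section Dimension1.
Context {R : realType} {N : nat}.
Variable xi : 'I_N -> 1.-tuple R.

Lemma local_discrepancy_dim1 (t : R) :
  local_discrepancy xi [tuple t] = empirical_cdf (fun i => tnth (xi i) ord0) t - t.
Proof.
rewrite /local_discrepancy /vol0 big_ord1 /=; congr (_ * _ - _).
apply: eq_bigr => i _; congr (if _ then _ else _).
by apply/forallP/idP => [|xit l]; [exact|rewrite (ord1 l)].
Qed.

Lemma nearest_dist_le_star_discrepancy_dim1 x : (0 < N)%N ->
  (forall i, cube 1 (xi i)) -> cube 1 x -> nearest_dist xi x <= star_discrepancy xi.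
Proof.
move=> N0 xi_cube cx.
apply: (node_free_radius_le _ (fun i => xi_cube i ord0) _ _ _ N0 _ (cx ord0)).
  move=> t t01.
  rewrite -local_discrepancy_dim1; apply: local_discrepancy_le_star => // l.
  by rewrite (ord1 l).
move=> i; apply: le_trans (nearest_dist_le xi x i) _.
by apply: linf_dist_le => // l; rewrite (ord1 l).
Qed.

End Dimension1.

Theorem corollary7p2 (R : realType) (d : nat) (hd : (1 <= d)%N)
  (mu : {measure set (d.-tuple R) -> \bar R}) (hmu : is_lebesgue_on_cube mu) :
  forall (N : nat), (0 < N)%N -> forall xi : 'I_N -> d.-tuple R,
    (forall i, cube d (xi i)) ->
    ((quant_error1 mu xi)%:E
       <= C_const mu * (star_discrepancy xi `^ (d%:R)^-1)%:E)%E
    /\ (d = 1%N -> quant_error1 mu xi <= star_discrepancy xi).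
Proof.
move=> N N0 xi xi_cube; split.
  apply: lee_ereal_inf_mulr; first exact/powR_gt0/star_discrepancy_gt0.
  by move=> c; exact: quant_error1_le_admissible.
move=> d1; subst d; apply: Rintegral_cube_le => // x cx.
by rewrite nearest_dist_ge0 nearest_dist_le_star_discrepancy_dim1.
Qed.
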